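(* Let $\rho>1$ and let $\mathbf{p}=(p_1,\ldots,p_n)$ be a probability distribution with $p_1\geq p_2\geq\cdots\geq p_n>0$ and $p_1/p_n\leq\rho$. Then $$H(\mathbf{p})\geq \log_2 n-\left(\frac{\rho\ln\rho}{\rho-1}-1-\ln\frac{\rho\ln\rho}{\rho-1}\right)\frac{1}{\ln 2}.$$
   Context: $H(\mathbf{p})=-\sum_i p_i\log_2 p_i$ is the Shannon entropy in bits, and $\ln$ is the natural logarithm. *)

From Stdlib Require Import Reals.
Open Scope R_scope.

Definition log2 (x : R) : R := ln x / ln 2.

Fixpoint sumR (n : nat) (f : nat -> R) : R :=
  match n with
  | O => 0
  | S m => sumR m f + f m
  end.

Definition entropy (n : nat) (p : nat -> R) : R :=
  - sumR n (fun i => p i * log2 (p i)).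

From Stdlib Require Import Reals Lra Lia Psatz.
Open Scope R_scope.

(* Write m := p_n and t := rho ln rho / (rho - 1).  Since x ln x is convex,
   on [m, rho m] it lies below its chord, which reads
   x ln x <= x ln m + t (x - m).  Summing over the distribution gives
   sum p_i ln p_i <= ln m + t - n m t, and then
   sum p_i ln p_i + ln n <= t - ln t + (ln (n m t) - n m t) <= t - 1 - ln t
   by ln y <= y - 1.  Dividing by -ln 2 converts nats into bits. *)

Lemma ln_le_sub_1 x : 0 < x -> ln x <= x - 1.
Proof.
  intros Hx.
  pose proof (exp_ineq1_le (ln x)) as H.
  rewrite exp_ln in H; lra.
Qed.

Lemma xlnx_ge_tangent u y : 0 < u -> 0 < y ->
  y * ln y + (ln y + 1) * (u - y) <= u * ln u.
Proof.
  intros Hu Hy.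
  assert (H : ln (y / u) <= y / u - 1)
    by (apply ln_le_sub_1, Rdiv_lt_0_compat; lra).
  unfold Rdiv in H.
  rewrite ln_mult, ln_Rinv in H by (try apply Rinv_0_lt_compat; lra).
  assert (Hu' : u * (ln y - ln u) <= u * (y * / u - 1))
    by (apply Rmult_le_compat_l; lra).
  replace (u * (y * / u - 1)) with (y - u) in Hu' by (field; lra).
  nra.
Qed.

(* Average the tangent inequalities at x, evaluated at a and b, with weights b - x and x - a. *)
Lemma xlnx_le_chord a b x : 0 < a -> a <= x <= b ->
  (b - a) * (x * ln x) <= (b - x) * (a * ln a) + (x - a) * (b * ln b).
Proof.
  intros Ha Hx.
  pose proof (xlnx_ge_tangent a x Ha ltac:(lra)) as Ta.
  pose proof (xlnx_ge_tangent b x ltac:(lra) ltac:(lra)) as Tb.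
  assert (Wa : (b - x) * (x * ln x + (ln x + 1) * (a - x)) <= (b - x) * (a * ln a))
    by (apply Rmult_le_compat_l; lra).
  assert (Wb : (x - a) * (x * ln x + (ln x + 1) * (b - x)) <= (x - a) * (b * ln b))
    by (apply Rmult_le_compat_l; lra).
  nra.
Qed.

Lemma xlnx_le_chord_ratio rho m x : 1 < rho -> 0 < m -> m <= x <= rho * m ->
  x * ln x <= x * ln m + (x - m) * (rho * ln rho / (rho - 1)).
Proof.
  intros Hrho Hm Hx.
  pose proof (xlnx_le_chord m (rho * m) x Hm Hx) as C.
  rewrite ln_mult in C by lra.
  apply (Rmult_le_reg_l ((rho - 1) * m)); [nra|].
  replace ((rho - 1) * m * (x * ln m + (x - m) * (rho * ln rho / (rho - 1))))
    with ((rho * m - x) * (m * ln m) + (x - m) * (rho * m * (ln rho + ln m)))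
    by (field; lra).
  lra.
Qed.

Lemma ln_add_sub_mul_le a t : 0 < a -> 0 < t -> ln a + t - a * t <= t - 1 - ln t.
Proof.
  intros Ha Ht.
  pose proof (ln_le_sub_1 (a * t) ltac:(nra)) as L.
  rewrite ln_mult in L by lra.
  lra.
Qed.

Lemma sumR_ext n f g : (forall i, (i < n)%nat -> f i = g i) -> sumR n f = sumR n g.
Proof.
  induction n as [|n IH]; simpl; intros H; [reflexivity|].
  rewrite IH by (intros; apply H; lia).
  rewrite H by lia; reflexivity.
Qed.

Lemma sumR_le n f g : (forall i, (i < n)%nat -> f i <= g i) -> sumR n f <= sumR n g.
Proof.
  induction n as [|n IH]; simpl; intros H; [lra|].
  pose proof (IH ltac:(intros; apply H; lia)).
  pose proof (H n ltac:(lia)).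
  lra.
Qed.

Lemma sumR_affine n f a b : sumR n (fun i => a * f i + b) = a * sumR n f + b * INR n.
Proof.
  induction n as [|n IH]; simpl sumR; [simpl; ring|].
  rewrite IH, S_INR; ring.
Qed.

Lemma entropy_nats n p : entropy n p = - sumR n (fun i => p i * ln (p i)) / ln 2.
Proof.
  unfold entropy, log2.
  rewrite (sumR_ext n _ (fun i => / ln 2 * (p i * ln (p i)) + 0))
    by (intros; unfold Rdiv; ring).
  rewrite sumR_affine; unfold Rdiv; ring.
Qed.

Theorem theorem2 (rho : R) (n : nat) (p : nat -> R) :
  1 < rho ->
  (1 <= n)%nat ->
  sumR n p = 1 ->
  (forall i, (i < n)%nat -> 0 < p i) ->
  (forall i j, (i <= j)%nat -> (j < n)%nat -> p j <= p i) ->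
  p 0%nat / p (n - 1)%nat <= rho ->
  entropy n p >=
    log2 (INR n)
    - (rho * ln rho / (rho - 1) - 1 - ln (rho * ln rho / (rho - 1))) * (1 / ln 2).
Proof.
  intros Hrho Hn Hsum Hpos Hmono Hratio.
  set (m := p (n - 1)%nat); set (t := rho * ln rho / (rho - 1)).
  assert (Hm : 0 < m) by (apply Hpos; lia).
  assert (Ht : 0 < t).
  { assert (0 < ln rho) by (rewrite <- ln_1; apply ln_increasing; lra).
    apply Rdiv_lt_0_compat; nra. }
  assert (Hmax : p 0%nat <= rho * m).
  { unfold Rdiv in Hratio; apply (Rmult_le_compat_r m) in Hratio; [|lra].
    rewrite Rmult_assoc, Rinv_l in Hratio; lra. }
  assert (Hpoint : forall i, (i < n)%nat ->
            p i * ln (p i) <= (ln m + t) * p i + - (m * t)).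
  { intros i Hi.
    assert (Hrange : m <= p i <= rho * m).
    { split; [apply Hmono; lia|].
      pose proof (Hmono 0%nat i ltac:(lia) Hi); lra. }
    pose proof (xlnx_le_chord_ratio rho m (p i) Hrho Hm Hrange) as C.
    fold t in C; lra. }
  assert (Hnats : sumR n (fun i => p i * ln (p i)) + ln (INR n) <= t - 1 - ln t).
  { pose proof (sumR_le n _ _ Hpoint) as S.
    rewrite sumR_affine, Hsum in S.
    assert (HN : 0 < INR n) by (apply lt_0_INR; lia).
    pose proof (ln_add_sub_mul_le (INR n * m) t ltac:(nra) Ht) as L.
    rewrite ln_mult in L by lra.
    lra. }
  assert (Hl2 : 0 < / ln 2)
    by (apply Rinv_0_lt_compat; rewrite <- ln_1; apply ln_increasing; lra).
  rewrite entropy_nats; unfold log2, Rdiv; fold t.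
  apply Rle_ge; nra.
Qed.
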